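(* Assume (A1), (A2), (A6) together with: (a) $A\perp\{Y(1,1),Y(1,0),M(0),M(1)\}\mid X$; (b) $\{M(0),M(1)\}\perp\{Y(1,0),Y(1,1)\}\mid X$; (c) there is $\epsilon>0$ with $P\{P(A=1,M=m\mid X)\ge\epsilon\}=1$ for $m=0,1$ and $P\{P(A=0\mid X)\ge\epsilon\}=1$. Then for (almost) every $x$, $$\psi(x) = P(Y(1,0)=0\mid Y(1,1)=1,X=x)\,P(M(0)=0\mid M(1)=1,X=x) = \Big[1-\frac{\mu_{10}(x)}{\mu_{11}(x)}\Big]\Big[1-\frac{\gamma_0(x)}{\gamma_1(x)}\Big].$$
   Context: Observed data $O=(X,A,M,Y)$ with covariates $X\in\mathbb{R}^d$, binary exposure $A$, binary mediator $M$, binary outcome $Y$. For $a,m\in\{0,1\}$, $Y(a,m)$ is the potential outcome under $A=a,M=m$, $M(a)$ the potential mediator, $Y(a):=Y(a,M(a))$, cross-world $Y(a,M(a'))$ by substitution, all on a common probability space with $O$. $\mu_{am}(x)=P(Y=1\mid A=a,M=m,X=x)$, $\gamma_a(x)=P(M=1\mid A=a,X=x)$. $\psi(x)=P(Y(1,M(0))=0,\,Y(0,M(0))=0\mid Y(1,M(1))=1,M(1)=1,X=x)$. (A1) consistency: $A=a,M=m\Rightarrow Y=Y(a,m)$ and $A=a\Rightarrow M=M(a)$. (A2) monotonicity: $Y(1,1)\ge Y(1,0)\ge Y(0,0)$, $Y(1,1)\ge Y(0,1)$, $M(1)\ge M(0)$. (A6) $P\{P(Y=1\mid A=1,M=1,X)\ge\epsilon\}=1$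 for some $\epsilon>0$. *)

From HB Require Import structures.
From mathcomp Require Import all_boot all_order all_algebra.
From mathcomp Require Import all_classical all_reals all_analysis.
Set Implicit Arguments. Unset Strict Implicit. Unset Printing Implicit Defensive.
Import Order.TTheory GRing.Theory Num.Theory.
Local Open Scope classical_set_scope.
Local Open Scope ring_scope.

Section defs.
Context {d : measure_display} {Omega : measurableType d} {R : realType}
  {dX : measure_display} {TX : measurableType dX}.

(** A binary random variable (modelled by [bool], [true] = 1):
    all its level sets are events. *)
Definition bool_rv (V : Omega -> bool) : Prop :=
  forall b, measurable [set w | V w = b].

(** [f] is a version of the conditional probability x |-> P(E | X = x):
    f is measurable and, for every measurable B,
    P(E /\ X \in B) = \int_{X \in B} f(X) dP. *)
Definition cprob_version (P : probability Omega R) (X : Omega -> TX)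
    (E : set Omega) (f : TX -> R) : Prop :=
  measurable_fun setT f /\
  forall B, measurable B ->
    P (E `&` X @^-1` B) = (\int[P]_(w in X @^-1` B) (f (X w))%:E)%E.

(** [f] is a version of x |-> P(E | F, X = x) := P(E /\ F | X = x) / P(F | X = x). *)
Definition ccprob_version (P : probability Omega R) (X : Omega -> TX)
    (E F : set Omega) (f : TX -> R) : Prop :=
  exists g h, cprob_version P X (E `&` F) g /\ cprob_version P X F h /\
    f = (fun x => g x / h x).

Definition cond_indep_events (P : probability Omega R) (X : Omega -> TX)
    (E F : set Omega) : Prop :=
  exists f g h, cprob_version P X (E `&` F) f /\ cprob_version P X E g /\
    cprob_version P X F h /\
    {ae P, forall w, f (X w) = g (X w) * h (X w)}.

End defs.

(* Monotonicity rewrites the events defining psi: its numerator event is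
   {M(0)=0, M(1)=1} /\ {Y(1,0)=0, Y(1,1)=1} and its denominator event is
   {M(1)=1} /\ {Y(1,1)=1}, so (b) factors psi into P(Y(1,0)=0 | Y(1,1)=1, X) and
   P(M(0)=0 | M(1)=1, X). By (a) and consistency, mu_1m = P(Y(1,m)=1 | X) and
   gamma_a = P(M(a)=1 | X), while monotonicity splits {Y(1,1)=1} disjointly into
   {Y(1,0)=0, Y(1,1)=1} and {Y(1,0)=1}, and {M(1)=1} into {M(0)=0, M(1)=1} and
   {M(0)=1}; hence each factor is one minus a ratio of the mu's or gamma's.
   Conditional probabilities are versions, unique almost surely because they
   are determined by their integrals over the events {X in B}; (A6) and (c)
   keep every denominator almost surely away from 0. *)

From HB Require Import structures.
From mathcomp Require Import all_boot all_order all_algebra.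
From mathcomp Require Import all_classical all_reals all_analysis.
From mathcomp Require Import measurable_realfun ring.
Set Implicit Arguments. Unset Strict Implicit. Unset Printing Implicit Defensive.
Import Order.TTheory GRing.Theory Num.Theory.
Local Open Scope classical_set_scope.
Local Open Scope ring_scope.

Lemma integrable_EFin_of_fin_integral d (T : measurableType d) (R : realType)
    (mu : {measure set T -> \bar R}) (h : T -> R) :
  measurable_fun setT h -> (\int[mu]_x (h x)%:E)%E \is a fin_num ->
  mu.-integrable setT (EFin \o h).
Proof.
move=> mh; rewrite integralE fin_numB => /andP[fin_pos fin_neg].
have mEh : measurable_fun setT (EFin \o h : T -> \bar R) by exact: measurableT_comp.
apply/integrableP; split => //.
rewrite (_ : (fun x => `|(EFin \o h) x|)%E = (EFin \o h)^\+ \+ (EFin \o h)^\-)%E;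
  last by rewrite -fune_abse.
rewrite ge0_integralD//; last 2 first.
- exact: measurable_funepos.
- exact: measurable_funeneg.
by apply: lte_add_pinfty; rewrite ltey_eq ?fin_pos ?fin_neg.
Qed.

Section cprob_versions.
Context {d : measure_display} {Omega : measurableType d} {R : realType}
  {dX : measure_display} {TX : measurableType dX}.
Variables (P : probability Omega R) (X : Omega -> TX).
Hypothesis mX : measurable_fun setT X.

Local Notation version := (cprob_version P X).

Lemma measurable_preimage B : measurable B -> measurable (X @^-1` B).
Proof. by move=> mB; rewrite -[X @^-1` B]setTI; exact: mX. Qed.

Lemma cprob_version_integrable E f : measurable E -> version E f ->
  P.-integrable setT (EFin \o (f \o X)).
Proof.
move=> mE [mf vf]; apply: integrable_EFin_of_fin_integral.
  exact: measurableT_comp.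
have := vf setT measurableT; rewrite preimage_setT setIT => <-.
exact: fin_num_measure.
Qed.

(* Integrate [f - g] over [X @^-1` [set g < f]]. *)
Lemma ae_le_of_integral_le (f g : TX -> R) :
  measurable_fun setT f -> measurable_fun setT g ->
  P.-integrable setT (EFin \o (f \o X)) -> P.-integrable setT (EFin \o (g \o X)) ->
  (forall B, measurable B ->
    (\int[P]_(w in X @^-1` B) (f (X w))%:E <=
     \int[P]_(w in X @^-1` B) (g (X w))%:E)%E) ->
  {ae P, forall w, f (X w) <= g (X w)}.
Proof.
move=> mf mg if_ ig le_int.
pose B := [set x | g x < f x].
have mB : measurable B.
  have mEf : measurable_fun setT (EFin \o f) by exact/measurable_EFinP.
  have mEg : measurable_fun setT (EFin \o g) by exact/measurable_EFinP.
  have := measurable_lte measurableT mEg mEf.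
  by rewrite setTI; congr measurable; apply/seteqP; split => x /=; rewrite lte_fin.
pose D := X @^-1` B; have mD : measurable D := measurable_preimage mB.
have gt0 w : D w -> 0 < f (X w) - g (X w) by rewrite subr_gt0.
have mfg : measurable_fun D (fun w => (f (X w) - g (X w))%:E).
  apply/measurable_EFinP; apply: (measurable_funS measurableT) => //.
  by apply: measurable_funB; exact: measurableT_comp.
have int0 : (\int[P]_(w in D) `|(f (X w) - g (X w))%:E| = 0)%E.
  apply/eqP; rewrite eq_le integral_ge0 ?andbT//.
  rewrite (eq_integral (fun w => (f (X w))%:E - (g (X w))%:E))%E; last first.
    by move=> w /[!inE] Dw; rewrite gee0_abs// lee_fin ltW// gt0.
  rewrite integralB_EFin// ?sube_le0 ?le_int//;
  exact: integrableS if_ + exact: integrableS ig.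
have := (ae_eq_integral_abs P mD mfg).1 int0.
apply: filterS => w fg0; rewrite leNgt; apply/negP => Dw.
by move: (fg0 Dw) (gt0 w Dw) => /= [->]; rewrite ltxx.
Qed.

Lemma cprob_version_le E F f g : measurable E -> measurable F -> E `<=` F ->
  version E f -> version F g -> {ae P, forall w, f (X w) <= g (X w)}.
Proof.
move=> mE mF EF vf vg; apply: ae_le_of_integral_le.
- exact: vf.1.
- exact: vg.1.
- exact: cprob_version_integrable vf.
- exact: cprob_version_integrable vg.
move=> B mB; rewrite -vf.2// -vg.2//.
by apply: le_measure; rewrite ?inE; [apply: measurableI..|apply: setSI];
  rewrite //; exact: measurable_preimage.
Qed.

Lemma cprob_version_unique E f g : measurable E -> version E f -> version E g ->
  {ae P, forall w, f (X w) = g (X w)}.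
Proof.
move=> mE vf vg.
apply: filterS2 (cprob_version_le mE mE (@subset_refl _ E) vf vg)
  (cprob_version_le mE mE (@subset_refl _ E) vg vf) => w fg gf.
exact/le_anti/andP.
Qed.

Lemma cprob_version_lb (eps : R) E F f g : measurable E -> measurable F ->
  E `<=` F -> version E f -> version F g ->
  {ae P, forall w, eps <= f (X w)} -> {ae P, forall w, eps <= g (X w)}.
Proof.
move=> mE mF EF vf vg; apply: filterS2 (cprob_version_le mE mF EF vf vg).
by move=> w /[swap]; exact: le_trans.
Qed.

Lemma cprob_version_set0 : version set0 (fun=> 0).
Proof.
by split=> [|B mB]; [exact: measurable_cst | rewrite set0I measure0 integral0].
Qed.

Lemma cprob_versionU E F f g : measurable E -> measurable F -> E `&` F = set0 ->
  version E f -> version F g -> version (E `|` F) (f \+ g).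
Proof.
move=> mE mF EF0 vf vg; split=> [|B mB]; first exact: measurable_funD vf.1 vg.1.
have mXB := measurable_preimage mB.
rewrite setIUl integralD_EFin//; last 2 first.
- exact: integrableS (cprob_version_integrable mE vf).
- exact: integrableS (cprob_version_integrable mF vg).
rewrite -vf.2// -vg.2//; apply: measureU; [exact: measurableI..|].
by rewrite setIACA EF0 set0I.
Qed.

Lemma ccprob_version_split E F G p f g :
  measurable E -> measurable F -> measurable G ->
  (E `&` F) `&` G = set0 -> F = (E `&` F) `|` G ->
  ccprob_version P X E F p -> version F f -> version G g ->
  {ae P, forall w, f (X w) != 0 -> p (X w) = 1 - g (X w) / f (X w)}.
Proof.
move=> mE mF mG disj FE [h [k [vh [vk ->]]]] vf vg.
have mEF := measurableI _ _ mE mF.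
have fE : {ae P, forall w, f (X w) = (h \+ g) (X w)}.
  apply: (cprob_version_unique mF vf); rewrite [in X in version X]FE.
  exact: cprob_versionU.
apply: filterS2 (cprob_version_unique mF vk vf) fE => w -> /= fE' f0.
have -> : h (X w) = f (X w) - g (X w) by rewrite fE' addrK.
by rewrite mulrBl divff.
Qed.

Lemma ae_neq0_of_ge (eps : R) (f : Omega -> R) : 0 < eps ->
  {ae P, forall w, eps <= f w} -> {ae P, forall w, f w != 0}.
Proof. by move=> eps_gt0; apply: filterS => w /(lt_le_trans eps_gt0)/lt0r_neq0. Qed.

Local Notation cindep := (cond_indep_events P X).

Lemma cond_indep_events_versionI E F : cindep E F -> exists f, version (E `&` F) f.
Proof. by move=> [f [_ [_ [vf _]]]]; exists f. Qed.

Lemma cond_indep_events_versionl E F : cindep E F -> exists f, version E f.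
Proof. by move=> [_ [g [_ [_ [vg _]]]]]; exists g. Qed.

Lemma cond_indep_events_versionr E F : cindep E F -> exists f, version F f.
Proof. by move=> [_ [_ [h [_ [_ [vh _]]]]]]; exists h. Qed.

Lemma cond_indep_events_mul E F f g h : measurable E -> measurable F ->
  cindep E F -> version (E `&` F) f -> version E g -> version F h ->
  {ae P, forall w, f (X w) = g (X w) * h (X w)}.
Proof.
move=> mE mF [f' [g' [h' [vf' [vg' [vh' fgh']]]]]] vf vg vh.
have ff' := cprob_version_unique (measurableI _ _ mE mF) vf vf'.
have gg' := cprob_version_unique mE vg vg'.
have hh' := cprob_version_unique mF vh vh'.
near=> w; rewrite (near ff' w) ?(near gg' w) ?(near hh' w) //; exact: (near fgh' w).
Unshelve. all: by end_near. Qed.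

Lemma cond_indep_eventsC E F : cindep E F -> cindep F E.
Proof.
move=> [f [g [h [vf [vg [vh fgh]]]]]]; exists f, h, g; rewrite setIC.
by do !split => //; apply: filterS fgh => w ->; exact: mulrC.
Qed.

Lemma cond_indep_events0 E F : cindep E F -> cindep E set0.
Proof.
move=> [f [g [h [vf [vg [vh _]]]]]]; exists (fun=> 0), g, (fun=> 0).
rewrite setI0; split; first exact: cprob_version_set0.
split=> //; split; first exact: cprob_version_set0.
by apply: aeW => w; rewrite mulr0.
Qed.

Lemma cond_indep_eventsU E F1 F2 : measurable E -> measurable F1 ->
  measurable F2 -> F1 `&` F2 = set0 ->
  cindep E F1 -> cindep E F2 -> cindep E (F1 `|` F2).
Proof.
move=> mE mF1 mF2 F12 [f1 [g1 [h1 [vf1 [vg1 [vh1 fgh1]]]]]]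
  [f2 [g2 [h2 [vf2 [vg2 [vh2 fgh2]]]]]].
exists (f1 \+ f2), g1, (h1 \+ h2); split.
  rewrite setIUr; apply: cprob_versionU => //; try exact: measurableI.
  by rewrite setIACA F12 setI0.
split=> //; split; first exact: cprob_versionU.
apply: filterS3 fgh1 fgh2 (cprob_version_unique mE vg2 vg1) => w /= -> -> ->.
by rewrite mulrDr.
Qed.

Lemma measurable_fin_pred (T : finType) (V : Omega -> T) :
  (forall t, measurable [set w | V w = t]) ->
  forall Q : pred T, measurable [set w | Q (V w)].
Proof.
move=> mV Q.
rewrite (_ : [set w | Q (V w)] = \bigcup_(t in [set t | Q t]) [set w | V w = t]).
  exact: fin_bigcup_measurable finite_finset (fun t _ => mV t).
by apply/seteqP; split => w /=; [exists (V w) | case=> t /= Qt ->].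
Qed.

(* [t0] only serves the empty case: a version of [E] must come from somewhere. *)
Lemma cond_indep_events_fin_pred (T : finType) (t0 : T) (V : Omega -> T) E :
  measurable E -> (forall t, measurable [set w | V w = t]) ->
  (forall t, cindep E [set w | V w = t]) ->
  forall Q : pred T, cindep E [set w | Q (V w)].
Proof.
move=> mE mV indepV Q.
suff indep_mem s : uniq s -> cindep E [set w | V w \in s].
  suff -> : [set w | Q (V w)] = [set w | V w \in [seq t <- enum T | Q t]].
    exact/indep_mem/filter_uniq/enum_uniq.
  by apply/seteqP; split => w /=; rewrite mem_filter mem_enum andbT.
elim: s => [_|t s IHs /= /andP[ts us]].
  rewrite (_ : [set w | _] = set0); last by apply/seteqP; split.
  exact: cond_indep_events0 (indepV t0).
have -> : [set w | V w \in t :: s] = [set w | V w = t] `|` [set w | V w \in s].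
  apply/seteqP; split => w /=; rewrite inE; first by case/orP => [/eqP|]; auto.
  by case=> [->|->]; rewrite ?eqxx ?orbT.
apply: cond_indep_eventsU => //; first exact: (measurable_fin_pred mV (mem s)).
  by apply/seteqP; split => w //= [Vt Vs]; move: ts; rewrite -Vt Vs.
exact: IHs.
Qed.

End cprob_versions.

(* Outcomes nested in others, like [Mp false w] in [Yp true (Mp false w) w],
   are split first, so that the outer one becomes an atom of its own. *)
Ltac case_bool_atom F w :=
  is_var w; lazymatch F with context [w] => fail | _ => idtac end;
  lazymatch type of (F w) with bool => case: (F w) end.

Ltac case_outcomes :=
  repeat match goal with |- context [_ (?F ?w) ?w] => case_bool_atom F w end;
  repeat match goal with |- context [?F ?w] => case_bool_atom F w end.

Ltac bool_cases :=
  case_outcomes; vm_compute; intuition discriminate.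

Ltac bool_set_eq := apply/seteqP; split => w /=; bool_cases.

Section mediation_model.
Context {d : measure_display} {Omega : measurableType d} {R : realType}
  {dX : measure_display} {TX : measurableType dX}.
Variables (P : probability Omega R) (X : Omega -> TX) (A M Y : Omega -> bool)
  (Yp : bool -> bool -> Omega -> bool) (Mp : bool -> Omega -> bool).
Hypotheses (mX : measurable_fun setT X) (rA : bool_rv A) (rM : bool_rv M)
  (rYp : forall a m, bool_rv (Yp a m)) (rMp : forall a, bool_rv (Mp a)).
Hypothesis consistY : forall w a m, A w = a -> M w = m -> Y w = Yp a m w.
Hypothesis consistM : forall w a, A w = a -> M w = Mp a w.
Hypothesis mono : forall w,
  (Yp true false w <= Yp true true w)%N /\ (Yp false false w <= Yp true false w)%N /\
  (Yp false true w <= Yp true true w)%N /\ (Mp false w <= Mp true w)%N.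
Hypothesis indepA : forall a y11 y10 m0 m1, cond_indep_events P X
  [set w | A w = a]
  [set w | Yp true true w = y11 /\ Yp true false w = y10 /\
           Mp false w = m0 /\ Mp true w = m1].
Hypothesis indepMY : forall m0 m1 y10 y11, cond_indep_events P X
  [set w | Mp false w = m0 /\ Mp true w = m1]
  [set w | Yp true false w = y10 /\ Yp true true w = y11].

Local Notation version := (cprob_version P X).
Local Notation ccversion := (ccprob_version P X).
Local Notation cindep := (cond_indep_events P X).

Ltac measurable_event := repeat apply: measurableI;
  first [exact: rA | exact: rM | exact: rYp | exact: rMp].

Let potentials w := (Yp true true w, Yp true false w, Mp false w, Mp true w).

Lemma potentials_levelE y11 y10 m0 m1 :
  [set w | potentials w = (y11, y10, m0, m1)] = [set w | Yp true true w = y11 /\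
    Yp true false w = y10 /\ Mp false w = m0 /\ Mp true w = m1].
Proof.
by apply/seteqP; split => w; rewrite /potentials /=;
  [case=> -> -> -> -> | case=> -> [-> [-> ->]]].
Qed.

Lemma cond_indep_A_event a E (Q : pred (bool * bool * bool * bool)) :
  E = [set w | Q (potentials w)] -> cindep [set w | A w = a] E.
Proof.
move=> ->; apply: (cond_indep_events_fin_pred mX (true, true, true, true)) => //;
  move=> [[[y11 y10] m0] m1]; rewrite potentials_levelE;
  first [exact: indepA | measurable_event].
Qed.

Lemma pair_levelE (U V : Omega -> bool) u v :
  [set w | (U w, V w) = (u, v)] = [set w | U w = u /\ V w = v].
Proof. by apply/seteqP; split => w /=; [case=> -> -> | case=> -> ->]. Qed.

Lemma cond_indep_MY_event E F (QM QY : pred (bool * bool)) :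
  E = [set w | QM (Mp false w, Mp true w)] ->
  F = [set w | QY (Yp true false w, Yp true true w)] -> cindep E F.
Proof.
move=> -> ->.
have mM t : measurable [set w | (Mp false w, Mp true w) = t].
  by case: t => m0 m1; rewrite pair_levelE; measurable_event.
have mY t : measurable [set w | (Yp true false w, Yp true true w) = t].
  by case: t => y10 y11; rewrite pair_levelE; measurable_event.
apply/cond_indep_eventsC/(cond_indep_events_fin_pred mX (true, true)) => //.
  exact: measurable_fin_pred.
move=> [m0 m1].
apply/cond_indep_eventsC/(cond_indep_events_fin_pred mX (true, true)) => //.
by move=> [y10 y11]; rewrite !pair_levelE; exact: indepMY.
Qed.

Lemma cond_indep_A_M a a' m :
  cindep [set w | A w = a] [set w | Mp a' w = m].
Proof.
by apply: (@cond_indep_A_event _ _ (fun t => (if a' then t.2 else t.1.2) == m));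
  case: a'; case: m; bool_set_eq.
Qed.

Lemma cond_indep_A_MY m : cindep [set w | A w = true]
  ([set w | Mp true w = m] `&` [set w | Yp true m w = true]).
Proof.
apply: (@cond_indep_A_event _ _
  (fun t => (t.2 == m) && (if m then t.1.1.1 else t.1.1.2))).
by case: m; bool_set_eq.
Qed.

Lemma cond_indep_M1_Y1 m :
  cindep [set w | Mp true w = m] [set w | Yp true m w = true].
Proof.
by apply: (@cond_indep_MY_event _ _ (fun t => t.2 == m)
  (fun t => if m then t.2 else t.1));
  case: m; bool_set_eq.
Qed.

Lemma treated_event m : [set w | A w = true /\ M w = m] =
  [set w | A w = true] `&` [set w | Mp true w = m].
Proof.
by case: m; apply/seteqP; split => w /=; move: (@consistM w true); bool_cases.
Qed.

Lemma treated_outcome_event m :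
  [set w | Y w = true] `&` [set w | A w = true /\ M w = m] =
  [set w | A w = true] `&` ([set w | Mp true w = m] `&` [set w | Yp true m w = true]).
Proof.
case: m; apply/seteqP; split => w /=;
  move: (@consistY w true true) (@consistY w true false) (@consistM w true); bool_cases.
Qed.

Lemma mediator_event a : [set w | M w = true] `&` [set w | A w = a] =
  [set w | A w = a] `&` [set w | Mp a w = true].
Proof.
by case: a; apply/seteqP; split => w /=;
  move: (@consistM w true) (@consistM w false); bool_cases.
Qed.

Lemma psi_num_event :
  [set w | Yp true (Mp false w) w = false /\ Yp false (Mp false w) w = false] `&`
  [set w | Yp true (Mp true w) w = true /\ Mp true w = true] =
  [set w | Mp false w = false /\ Mp true w = true] `&`
  [set w | Yp true false w = false /\ Yp true true w = true].
Proof. by apply/seteqP; split => w /=; move: (mono w); bool_cases. Qed.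

Lemma psi_den_event :
  [set w | Yp true (Mp true w) w = true /\ Mp true w = true] =
  [set w | Mp true w = true] `&` [set w | Yp true true w = true].
Proof. by bool_set_eq. Qed.

Lemma psi_eq_py_pm psi py pm :
  ccversion
    [set w | Yp true (Mp false w) w = false /\ Yp false (Mp false w) w = false]
    [set w | Yp true (Mp true w) w = true /\ Mp true w = true] psi ->
  ccversion [set w | Yp true false w = false] [set w | Yp true true w = true] py ->
  ccversion [set w | Mp false w = false] [set w | Mp true w = true] pm ->
  {ae P, forall w, psi (X w) = py (X w) * pm (X w)}.
Proof.
move=> [gp [hp [vgp [vhp ->]]]] [gy [hy [vgy [vhy ->]]]] [gm [hm [vgm [vhm ->]]]].
have num : {ae P, forall w, gp (X w) = gm (X w) * gy (X w)}.
  apply: (cond_indep_events_mul mX _ _ (indepMY false true false true)) => //;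
    try measurable_event.
  by rewrite -psi_num_event.
have den : {ae P, forall w, hp (X w) = hm (X w) * hy (X w)}.
  apply: (cond_indep_events_mul mX _ _ (cond_indep_M1_Y1 true)) => //;
    try measurable_event.
  by rewrite -psi_den_event.
by apply: filterS2 num den => w -> ->; rewrite invfM; ring.
Qed.

Lemma mu_eq_Y1 m mu al s y :
  ccversion [set w | Y w = true] [set w | A w = true /\ M w = m] mu ->
  version [set w | A w = true] al -> version [set w | Mp true w = m] s ->
  version [set w | Yp true m w = true] y ->
  {ae P, forall w, al (X w) != 0 -> s (X w) != 0 -> mu (X w) = y (X w)}.
Proof.
move=> [gu [hu [vgu [vhu ->]]]] val vs vy.
have [sy vsy] := cond_indep_events_versionI (cond_indep_M1_Y1 m).
have num : {ae P, forall w, gu (X w) = al (X w) * sy (X w)}.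
  apply: (cond_indep_events_mul mX _ _ (cond_indep_A_MY m)) => //;
    try measurable_event.
  by rewrite -treated_outcome_event.
have den : {ae P, forall w, hu (X w) = al (X w) * s (X w)}.
  apply: (cond_indep_events_mul mX _ _ (cond_indep_A_M true true m)) => //;
    try measurable_event.
  by rewrite -treated_event.
have syE : {ae P, forall w, sy (X w) = s (X w) * y (X w)}.
  by apply: (cond_indep_events_mul mX _ _ (cond_indep_M1_Y1 m)) => //; measurable_event.
apply: filterS3 num den syE => w -> -> -> al0 s0.
by field; rewrite al0 s0.
Qed.

Lemma gam_eq_M a gam al s :
  ccversion [set w | M w = true] [set w | A w = a] gam ->
  version [set w | A w = a] al -> version [set w | Mp a w = true] s ->
  {ae P, forall w, al (X w) != 0 -> gam (X w) = s (X w)}.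
Proof.
move=> [gg [hg [vgg [vhg ->]]]] val vs.
have num : {ae P, forall w, gg (X w) = al (X w) * s (X w)}.
  apply: (cond_indep_events_mul mX _ _ (cond_indep_A_M a a true)) => //;
    try measurable_event.
  by rewrite -mediator_event.
have den := cprob_version_unique mX (rA a) vhg val.
apply: filterS2 num den => w -> -> al0.
by rewrite [al _ * _]mulrC mulfK.
Qed.

Lemma py_eq_ratio py y1 y10 :
  ccversion [set w | Yp true false w = false] [set w | Yp true true w = true] py ->
  version [set w | Yp true true w = true] y1 ->
  version [set w | Yp true false w = true] y10 ->
  {ae P, forall w, y1 (X w) != 0 -> py (X w) = 1 - y10 (X w) / y1 (X w)}.
Proof.
apply: ccprob_version_split => //; try measurable_event; first by bool_set_eq.
by apply/seteqP; split => w /=; move: (mono w); bool_cases.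
Qed.

Lemma pm_eq_ratio pm s1 t1 :
  ccversion [set w | Mp false w = false] [set w | Mp true w = true] pm ->
  version [set w | Mp true w = true] s1 -> version [set w | Mp false w = true] t1 ->
  {ae P, forall w, s1 (X w) != 0 -> pm (X w) = 1 - t1 (X w) / s1 (X w)}.
Proof.
apply: ccprob_version_split => //; try measurable_event; first by bool_set_eq.
by apply/seteqP; split => w /=; move: (mono w); bool_cases.
Qed.

Lemma lb_of_treated_version m (eps : R) f al s :
  version [set w | A w = true /\ M w = m] f -> {ae P, forall w, eps <= f (X w)} ->
  version [set w | A w = true] al -> version [set w | Mp true w = m] s ->
  {ae P, forall w, eps <= al (X w)} /\ {ae P, forall w, eps <= s (X w)}.
Proof.
move=> vf f_lb val vs.
split.
  apply: (cprob_version_lb mX _ _ _ vf val) => //; try measurable_event.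
  by move=> w [].
apply: (cprob_version_lb mX _ _ _ vf vs) => //; try measurable_event.
by rewrite treated_event => w [].
Qed.

Lemma py_identified (eps eps' : R) py mu10 mu11 mu11' :
  0 < eps -> (forall m, exists f, version [set w | A w = true /\ M w = m] f /\
                                  {ae P, forall w, eps <= f (X w)}) ->
  0 < eps' -> ccversion [set w | Y w = true] [set w | A w = true /\ M w = true] mu11' ->
  {ae P, forall w, eps' <= mu11' (X w)} ->
  ccversion [set w | Yp true false w = false] [set w | Yp true true w = true] py ->
  ccversion [set w | Y w = true] [set w | A w = true /\ M w = false] mu10 ->
  ccversion [set w | Y w = true] [set w | A w = true /\ M w = true] mu11 ->
  {ae P, forall w, py (X w) = 1 - mu10 (X w) / mu11 (X w)}.
Proof.
move=> eps_gt0 treated_ge eps'_gt0 vmu11' mu11'_ge vpy vmu10 vmu11.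
have [al val] := cond_indep_events_versionl (cond_indep_A_M true true true).
have [s1 vs1] := cond_indep_events_versionl (cond_indep_M1_Y1 true).
have [y1 vy1] := cond_indep_events_versionr (cond_indep_M1_Y1 true).
have [s0 vs0] := cond_indep_events_versionl (cond_indep_M1_Y1 false).
have [y10 vy10] := cond_indep_events_versionr (cond_indep_M1_Y1 false).
have [[f1 [vf1 f1_ge]] [f0 [vf0 f0_ge]]] := (treated_ge true, treated_ge false).
have [al_ge s1_ge] := lb_of_treated_version vf1 f1_ge val vs1.
have [_ s0_ge] := lb_of_treated_version vf0 f0_ge val vs0.
have al_neq0 := ae_neq0_of_ge eps_gt0 al_ge.
have s1_neq0 := ae_neq0_of_ge eps_gt0 s1_ge.
have s0_neq0 := ae_neq0_of_ge eps_gt0 s0_ge.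
have y1_neq0 : {ae P, forall w, y1 (X w) != 0}.
  apply: (ae_neq0_of_ge eps'_gt0); near=> w.
  rewrite -(near (mu_eq_Y1 vmu11' val vs1 vy1) w)
    ?(near al_neq0 w) ?(near s1_neq0 w) //.
  exact: (near mu11'_ge w).
near=> w; rewrite (near (py_eq_ratio vpy vy1 vy10) w) ?(near y1_neq0 w) //.
rewrite (near (mu_eq_Y1 vmu10 val vs0 vy10) w) ?(near al_neq0 w) ?(near s0_neq0 w) //.
by rewrite (near (mu_eq_Y1 vmu11 val vs1 vy1) w) ?(near al_neq0 w) ?(near s1_neq0 w).
Unshelve. all: by end_near. Qed.

Lemma pm_identified (eps : R) f1 al0 pm gam0 gam1 :
  0 < eps -> version [set w | A w = true /\ M w = true] f1 ->
  {ae P, forall w, eps <= f1 (X w)} ->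
  version [set w | A w = false] al0 -> {ae P, forall w, eps <= al0 (X w)} ->
  ccversion [set w | Mp false w = false] [set w | Mp true w = true] pm ->
  ccversion [set w | M w = true] [set w | A w = false] gam0 ->
  ccversion [set w | M w = true] [set w | A w = true] gam1 ->
  {ae P, forall w, pm (X w) = 1 - gam0 (X w) / gam1 (X w)}.
Proof.
move=> eps_gt0 vf1 f1_ge val0 al0_ge vpm vgam0 vgam1.
have [al val] := cond_indep_events_versionl (cond_indep_A_M true true true).
have [s1 vs1] := cond_indep_events_versionr (cond_indep_A_M true true true).
have [t1 vt1] := cond_indep_events_versionr (cond_indep_A_M true false true).
have [al_ge s1_ge] := lb_of_treated_version vf1 f1_ge val vs1.
have al_neq0 := ae_neq0_of_ge eps_gt0 al_ge.
have s1_neq0 := ae_neq0_of_ge eps_gt0 s1_ge.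
have al0_neq0 := ae_neq0_of_ge eps_gt0 al0_ge.
near=> w; rewrite (near (pm_eq_ratio vpm vs1 vt1) w) ?(near s1_neq0 w) //.
rewrite (near (gam_eq_M vgam0 val0 vt1) w) ?(near al0_neq0 w) //.
by rewrite (near (gam_eq_M vgam1 val vs1) w) ?(near al_neq0 w).
Unshelve. all: by end_near. Qed.

End mediation_model.

Theorem mainTheorem4 (d : measure_display) (Omega : measurableType d)
  (R : realType) (P : probability Omega R) (n : nat)
  (X : Omega -> n.-tuple R) (A M Y : Omega -> bool)
  (Yp : bool -> bool -> Omega -> bool) (Mp : bool -> Omega -> bool) :
  measurable_fun setT X ->
  bool_rv A -> bool_rv M -> bool_rv Y ->
  (forall a m, bool_rv (Yp a m)) -> (forall a, bool_rv (Mp a)) ->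
  (* (A1) consistency *)
  (forall w a m, A w = a -> M w = m -> Y w = Yp a m w) ->
  (forall w a, A w = a -> M w = Mp a w) ->
  (* (A2) monotonicity *)
  (forall w, (Yp true false w <= Yp true true w)%N /\
             (Yp false false w <= Yp true false w)%N /\
             (Yp false true w <= Yp true true w)%N /\
             (Mp false w <= Mp true w)%N) ->
  (* (A6) *)
  (exists2 eps : R, 0 < eps &
     exists f, ccprob_version P X [set w | Y w = true]
                 [set w | A w = true /\ M w = true] f /\
               {ae P, forall w, eps <= f (X w)}) ->
  (* (a) A independent of {Y(1,1), Y(1,0), M(0), M(1)} given X *)
  (forall a y11 y10 m0 m1, cond_indep_events P X [set w | A w = a]
     [set w | Yp true true w = y11 /\ Yp true false w = y10 /\
              Mp false w = m0 /\ Mp true w = m1]) ->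
  (* (b) {M(0), M(1)} independent of {Y(1,0), Y(1,1)} given X *)
  (forall m0 m1 y10 y11, cond_indep_events P X
     [set w | Mp false w = m0 /\ Mp true w = m1]
     [set w | Yp true false w = y10 /\ Yp true true w = y11]) ->
  (* (c) positivity *)
  (exists2 eps : R, 0 < eps &
     (forall m, exists f, cprob_version P X [set w | A w = true /\ M w = m] f /\
                {ae P, forall w, eps <= f (X w)}) /\
     (exists f, cprob_version P X [set w | A w = false] f /\
                {ae P, forall w, eps <= f (X w)})) ->
  (* conclusion, for any versions of the conditional probabilities involved *)
  forall psi py pm mu10 mu11 gam0 gam1 : n.-tuple R -> R,
  ccprob_version P X
    [set w | Yp true (Mp false w) w = false /\ Yp false (Mp false w) w = false]
    [set w | Yp true (Mp true w) w = true /\ Mp true w = true] psi ->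
  ccprob_version P X [set w | Yp true false w = false]
    [set w | Yp true true w = true] py ->
  ccprob_version P X [set w | Mp false w = false] [set w | Mp true w = true] pm ->
  ccprob_version P X [set w | Y w = true]
    [set w | A w = true /\ M w = false] mu10 ->
  ccprob_version P X [set w | Y w = true]
    [set w | A w = true /\ M w = true] mu11 ->
  ccprob_version P X [set w | M w = true] [set w | A w = false] gam0 ->
  ccprob_version P X [set w | M w = true] [set w | A w = true] gam1 ->
  {ae P, forall w, psi (X w) = py (X w) * pm (X w)} /\
  {ae P, forall w, psi (X w) =
     (1 - mu10 (X w) / mu11 (X w)) * (1 - gam0 (X w) / gam1 (X w))}.

Proof.
move=> mX rA rM _ rYp rMp consistY consistM mono
  [eps' eps'_gt0 [mu11' [vmu11' mu11'_ge]]] indepA indepMY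
  [eps eps_gt0 [treated_ge [al0 [val0 al0_ge]]]]
  psi py pm mu10 mu11 gam0 gam1 vpsi vpy vpm vmu10 vmu11 vgam0 vgam1.
have psiE := psi_eq_py_pm mX rYp rMp mono indepMY vpsi vpy vpm.
split=> //.
have pyE := py_identified mX rA rM rYp rMp consistY consistM mono indepA indepMY
  eps_gt0 treated_ge eps'_gt0 vmu11' mu11'_ge vpy vmu10 vmu11.
have [f1 [vf1 f1_ge]] := treated_ge true.
have pmE := pm_identified mX rA rM rYp rMp consistM mono indepA
  eps_gt0 vf1 f1_ge val0 al0_ge vpm vgam0 vgam1.
by apply: filterS3 psiE pyE pmE => w -> -> ->.
Qed.
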